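(* Consider a 1DPNN as described in the context, with $L\ge 2$ layers and a differentiable loss $\epsilon$. For every $l\in\{1,\dots,L-1\}$ and every $j\in\{1,\dots,N_l\}$, $$\frac{\partial \epsilon}{\partial y_{j}^{(l)}}=\sum_{d=1}^{D_{l+1}}d\left(\sum_{i=1}^{N_{l+1}}\tilde{w}_{ijd}^{(l+1)}*g_i^{(l+1)}\right)\odot\left(y_{j}^{(l)}\right)^{d-1},$$ where $\tilde{w}_{ijd}^{(l+1)}\in\mathbb{R}^{K_{l+1}}$ is given by $\tilde{w}_{ijd}^{(l+1)}(k)=w_{ijd}^{(l+1)}(K_{l+1}-1-k)$ for $k\in\{0,\dots,K_{l+1}-1\}$, and $g_i^{(l+1)}\in\mathbb{R}^{M_l+K_{l+1}-1}$ is the zero-padded vector defined for $n\in\{0,\dots,M_l+K_{l+1}-2\}$ by $g_i^{(l+1)}(n)=\frac{\partial \epsilon}{\partial x_i^{(l+1)}}(n-K_{l+1}+1)$ if $K_{l+1}-1\le n\le M_{l+1}+K_{l+1}-2$, and $g_i^{(l+1)}(n)=0$ otherwise. (Here $(y_j^{(l)})^0$ is the all-ones vector.)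
   Context: A 1DPNN with $L\ge 1$ layers is specified as follows. Layer $0$ is the input: $N_0$ signals $y_1^{(0)},\dots,y_{N_0}^{(0)}\in\mathbb{R}^{M_0}$ (entries indexed $0,\dots,M_0-1$). For each layer $l\in\{1,\dots,L\}$ there are positive integers $N_l$ (number of neurons), $K_l$ (kernel size) and $D_l$ (polynomial degree), with $M_l=M_{l-1}-K_l+1\ge 1$. Neuron $i$ of layer $l$ has weight vectors $w_{ijd}^{(l)}\in\mathbb{R}^{K_l}$ (entries indexed $0,\dots,K_l-1$) for $j\in\{1,\dots,N_{l-1}\}$, $d\in\{1,\dots,D_l\}$, a bias $b_i^{(l)}\in\mathbb{R}$, and a differentiable activation function $f_i^{(l)}:\mathbb{R}\to\mathbb{R}$ applied componentwise. Its pre-activation output $x_i^{(l)}\in\mathbb{R}^{M_l}$ and output $y_i^{(l)}\in\mathbb{R}^{M_l}$ are $$x_i^{(l)}(m)=\sum_{j=1}^{N_{l-1}}\sum_{d=1}^{D_l}\sum_{k=0}^{K_l-1}w_{ijd}^{(l)}(k)\,\big(y_j^{(l-1)}(m+k)\big)^d+b_i^{(l)},\qquad y_i^{(l)}=f_i^{(l)}\big(x_i^{(l)}\big),$$ for $m\in\{0,\dots,M_l-1\}$. Notation: $\odot$ is the componentwise (Hadamard) product, powers of vectors are componentwise, and for $a\in\mathbb{R}^{K}$, $b\in\mathbb{R}^{M'}$ with $M'\ge K$, $a*b\in\mathbb{R}^{M'-K+1}$ is defined by $(a*b)(m)=\sum_{k=0}^{K-1}a(k)\,b(m+k)$ (this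 operation is called convolution). A differentiable loss $\epsilon$ is a function of the network output $(y_1^{(L)},\dots,y_{N_L}^{(L)})$ (and a fixed desired output); for each layer $l$ it is viewed as a differentiable function of the outputs $y_1^{(l)},\dots,y_{N_l}^{(l)}$ of layer $l$, with all subsequent layers computed by the forward propagation above. $\frac{\partial\epsilon}{\partial y_i^{(l)}}\in\mathbb{R}^{M_l}$ denotes the vector of partial derivatives of $\epsilon$ with respect to the entries of $y_i^{(l)}$ in this sense, and $\frac{\partial\epsilon}{\partial x_i^{(l)}}=\frac{\partial \epsilon}{\partial y_{i}^{(l)}}\odot (f_i^{(l)})'(x_i^{(l)})$ (derivative applied componentwise). *)

From HB Require Import structures.
From mathcomp Require Import all_boot all_order all_algebra.
From mathcomp Require Import all_classical all_reals all_analysis.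
Set Implicit Arguments. Unset Strict Implicit. Unset Printing Implicit Defensive.
Import Order.TTheory GRing.Theory Num.Theory.
Import numFieldNormedType.Exports.
Local Open Scope ring_scope.

(* Conventions (as in the paper): neurons indexed 1..N_l, degrees 1..D_l,
   kernel entries 0..K_l-1, signal entries 0..M_l-1.  A layer's collection
   of signals is encoded as a function  neuron -> position -> R ; entries
   outside the index ranges are never used. *)
Definition signals (R : realType) := nat -> nat -> R.

Record pnn (R : realType) := PNN {
  L : nat;
  N : nat -> nat;
  K : nat -> nat;
  D : nat -> nat;
  M0 : nat;
  w : nat -> nat -> nat -> nat -> nat -> R;   (* w l i j d k = w_{ijd}^{(l)}(k) *)
  b : nat -> nat -> R;
  f : nat -> nat -> R -> R
}.

Section PNN.
Variables (R : realType) (P : pnn R).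

Fixpoint M (l : nat) : nat :=
  match l with 0 => M0 P | l'.+1 => (M l' - K P l'.+1 + 1)%N end.

Definition preact (l : nat) (y : signals R) (i m : nat) : R :=
  \sum_(1 <= j < (N P l.-1).+1) \sum_(1 <= d < (D P l).+1) \sum_(0 <= k < K P l)
      w P l i j d k * (y j (m + k)%N) ^+ d + b P l i.

Definition layer (l : nat) (y : signals R) : signals R :=
  fun i m => f P l i (preact l y i m).

Fixpoint run (l n : nat) (z : signals R) : signals R :=
  match n with 0 => z | n'.+1 => run l.+1 n' (layer l.+1 z) end.

Fixpoint outp (y0 : signals R) (l : nat) : signals R :=
  match l with 0 => y0 | l'.+1 => layer l'.+1 (outp y0 l') end.

Definition loss_at (eps : 'M[R]_(N P (L P), M (L P)) -> R) (l : nat)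
  (z : signals R) : R :=
  eps (\matrix_(i < N P (L P), m < M (L P)) run l (L P - l) z i.+1 m).

Definition upd (z : signals R) (j m : nat) (t : R) : signals R :=
  fun j' m' => if (j' == j) && (m' == m) then t else z j' m'.

Definition dEdy eps y0 (l j m : nat) : R :=
  derive1 (fun t => loss_at eps l (upd (outp y0 l) j m t)) (outp y0 l j m).

Definition dEdx eps y0 (l i m : nat) : R :=
  dEdy eps y0 l i m * derive1 (f P l i) (preact l (outp y0 l.-1) i m).

Definition conv1d (Kc : nat) (a bb : nat -> R) (m : nat) : R :=
  \sum_(0 <= k < Kc) a k * bb (m + k)%N.

Definition wflip (l i j d : nat) (k : nat) : R := w P l i j d (K P l - 1 - k)%N.

Definition gpad eps y0 (l i : nat) (n : nat) : R :=
  if ((K P l - 1 <= n) && (n <= M l + K P l - 2))%N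
  then dEdx eps y0 l i (n - (K P l - 1))%N else 0.

End PNN.

Arguments loss_at {R} P eps l z.
Arguments dEdy {R} P eps y0 l j m.
Arguments dEdx {R} P eps y0 l i m.
Arguments gpad {R} P eps y0 l i n.

From HB Require Import structures.
From mathcomp Require Import all_boot all_order all_algebra.
From mathcomp Require Import all_classical all_reals all_analysis.
From mathcomp Require Import zify ring.
Import Order.TTheory GRing.Theory Num.Theory.
Import numFieldNormedType.Exports.
Set Implicit Arguments.
Unset Strict Implicit.
Local Open Scope ring_scope.

(** Forward mode: perturbing the entry [y_j^(l)(m)] perturbs the later layers
    along a tangent signal computed by the linearised layers [dlayer], and the
    loss along ['d eps] of the final tangent.  This directional derivative
    [dloss l] is linear in the tangent, and one linearised layer maps the
    basis signal at [(j, m)] to a combination of basis signals at layer [l+1]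
    with coefficients [f'(x_i(k)) * sum_d d y_j(m)^(d-1) w_ijd(m - k)].  Hence
    [dE/dy_j(m) = sum_(i,k) dE/dx_i(k) * sum_d d y_j(m)^(d-1) w_ijd(m - k)],
    and reindexing by [k = m + p - (K - 1)] turns the sum over [k] into the
    convolution at [m] of the flipped kernel with the zero-padded gradient. *)

Section DeriveFacts.
Variable R : numFieldType.

Lemma is_derive_big_seq (V W : normedModType R) (I : eqType) (s : seq I)
    (F : I -> V -> W) (dF : I -> W) (x v : V) :
  {in s, forall i, is_derive x v (F i) (dF i)} ->
  is_derive x v (fun t => \sum_(i <- s) F i t) (\sum_(i <- s) dF i).
Proof.
rewrite -fct_sumE; elim: s => [|a s IH] dF_s.
  by rewrite !big_nil; exact: is_derive_cst.
rewrite !big_cons; apply: is_deriveD; first by apply: dF_s; rewrite mem_head.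
by apply: IH => i si; apply: dF_s; rewrite in_cons si orbT.
Qed.

Lemma is_deriveZl (W : normedModType R) (k : R -> R) (dk : R)
    (c : W) (t0 : R) :
  is_derive t0 1 k dk -> is_derive t0 1 (fun t => k t *: c) (dk *: c).
Proof.
case=> /derivable1_diffP dk_diff <-; apply: DeriveDef.
  exact/diff_derivable/differentiableZl.
by rewrite deriveE ?diffZl -?deriveE //; exact: differentiableZl.
Qed.

Lemma is_derive_matrix m n (a : 'I_m -> 'I_n -> R -> R) (da : 'I_m -> 'I_n -> R)
    (t0 : R) :
  (forall i j, is_derive t0 1 (a i j) (da i j)) ->
  is_derive t0 1 (fun t => \matrix_(i, j) a i j t) (\matrix_(i, j) da i j).
Proof.
move=> da_ij.
have -> : (fun t => \matrix_(i, j) a i j t) =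
          \sum_i \sum_j (fun t => a i j t *: delta_mx i j).
  apply/funext => t; rewrite [LHS]matrix_sum_delta fct_sumE.
  by apply: eq_bigr => i _; rewrite fct_sumE; apply: eq_bigr => j _; rewrite mxE.
rewrite [X in is_derive _ _ _ X]matrix_sum_delta.
apply: is_derive_sum => i; apply: is_derive_sum => j.
by rewrite mxE; exact: is_deriveZl.
Qed.

Lemma derive1_comp_matrix (W : normedModType R) m n (h : 'M[R]_(m, n) -> W)
    (a : 'I_m -> 'I_n -> R -> R) (da : 'I_m -> 'I_n -> R) (t0 : R) :
  differentiable h (\matrix_(i, j) a i j t0) ->
  (forall i j, is_derive t0 1 (a i j) (da i j)) ->
  derive1 (fun t => h (\matrix_(i, j) a i j t)) t0 =
  'd h (\matrix_(i, j) a i j t0) (\matrix_(i, j) da i j).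
Proof.
move=> h_diff /is_derive_matrix [/derivable1_diffP A_diff A_der].
rewrite (_ : (fun t => h _) = h \o (fun t => \matrix_(i, j) a i j t)) //.
rewrite derive1E'; last exact: differentiable_comp.
by rewrite diff_comp //= -A_der deriveE.
Qed.

End DeriveFacts.

Lemma big_nat_delta (R : pzSemiRingType) (lo hi y : nat) (F : nat -> R) :
  \sum_(lo <= x < hi) (x == y)%:R * F x = (lo <= y < hi)%:R * F y.
Proof.
have [y_in | y_out] := boolP (lo <= y < hi)%N.
  rewrite (bigD1_seq y) ?mem_index_iota ?iota_uniq //= eqxx big1 ?addr0 //.
  by move=> x /negbTE ->; rewrite mul0r.
rewrite mul0r big1_seq // => x x_in; case: eqVneq => [xy | _]; last by rewrite mul0r.
by move: x_in; rewrite mem_index_iota xy (negbTE y_out).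
Qed.

(* [0 < Mc] matters: for [Mc = 0, Kc = 1] the truncated bound [Mc + Kc - 2]
   is [0] instead of [-1], and the padding would admit [n = 0]. *)
Lemma conv1d_flip_pad (R : realType) (Kc Mc : nat) (a h : nat -> R) (m : nat) :
  (0 < Kc)%N -> (0 < Mc)%N ->
  conv1d Kc (fun q => a (Kc - 1 - q)%N)
    (fun n => if ((Kc - 1 <= n) && (n <= Mc + Kc - 2))%N
              then h (n - (Kc - 1))%N else 0) m =
  \sum_(0 <= k < Mc) h k * \sum_(0 <= q < Kc) (k + q == m)%:R * a q.
Proof.
move=> Kc_gt0 Mc_gt0.
under eq_bigr => k _ do rewrite mulr_sumr.
rewrite exchange_big /conv1d big_nat_rev /=; apply: eq_big_nat => q /andP[_ qK].
rewrite (eq_bigr (fun k => (k == (m - q)%N)%:R * ((q <= m)%:R * (a q * h k))));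
  last first.
  move=> k _; rewrite (_ : (k + q == m) = (k == m - q)%N && (q <= m)%N); last first.
    by apply/idP/idP => [/eqP | /andP[/eqP]]; [|]; lia.
  by rewrite -mulnb natrM mulrC -!mulrA.
rewrite big_nat_delta add0n (_ : (Kc - 1 - (Kc - q.+1)) = q)%N; last by lia.
rewrite (_ : ((Kc - 1 <= m + (Kc - q.+1)) && (m + (Kc - q.+1) <= Mc + Kc - 2))%N =
             (0 <= m - q < Mc)%N && (q <= m)%N); last by apply/idP/idP; lia.
case: ifP => [/andP[-> ->] | /negbT]; last first.
  by rewrite negb_and => /orP[] /negbTE ->;
    rewrite ?andbF /= mulr0n !(mul0r, mulr0).
rewrite (_ : m + (Kc - q.+1) - (Kc - 1) = m - q)%N; last by lia.
by rewrite /= mulr1n !mul1r.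
Qed.

Section TangentPropagation.
Variables (R : realType) (P : pnn R).

Definition in_layer (l i p : nat) : bool := ((0 < i <= N P l) && (p < M P l))%N.

(* Zero outside the index range, so that [signal_sum_delta] applies to it. *)
Definition dlayer (l : nat) (z v : signals R) : signals R := fun i p =>
  if in_layer l i p then
    derive1 (f P l i) (preact P l z i p) *
    \sum_(1 <= j < (N P l.-1).+1) \sum_(1 <= d < (D P l).+1)
      \sum_(0 <= k < K P l)
        w P l i j d k * (d%:R * z j (p + k)%N ^+ d.-1 * v j (p + k)%N)
  else 0.

Fixpoint drun (l n : nat) (z v : signals R) : signals R :=
  match n with
  | 0 => v
  | n'.+1 => drun l.+1 n' (layer P l.+1 z) (dlayer l.+1 z v)
  end.

Lemma dlayer_is_linear l z : linear (dlayer l z).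
Proof.
move=> a u v.
have combE (s t : signals R) i p : (a *: s + t) i p = a * s i p + t i p by [].
apply/funext => i; apply/funext => p; rewrite combE /dlayer.
case: ifP => _; last by rewrite mulr0 addr0.
rewrite mulrCA -mulrDr; congr (_ * _).
rewrite mulr_sumr -big_split; apply: eq_bigr => j _.
rewrite mulr_sumr -big_split; apply: eq_bigr => d _.
rewrite mulr_sumr -big_split; apply: eq_bigr => k _.
rewrite combE /=; ring.
Qed.

Lemma drun_is_linear l n z : linear (drun l n z).
Proof.
by elim: n l z => [|n IH] l z a u v //=; rewrite dlayer_is_linear IH.
Qed.

Lemma dlayer_outside l z v i p : ~~ in_layer l i p -> dlayer l z v i p = 0.
Proof. by rewrite /dlayer => /negbTE ->. Qed.

Hypothesis K_le_M : forall l, (1 <= l <= L P)%N -> (K P l <= M P l.-1)%N.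
Hypothesis f_derivable : forall l i, (1 <= l <= L P)%N -> (1 <= i <= N P l)%N ->
  forall t : R, derivable (f P l i) t 1.

Lemma is_derive_layer l (g : R -> signals R) (v : signals R) (t0 : R) :
  (l < L P)%N ->
  (forall i p, in_layer l i p -> is_derive t0 1 (fun t => g t i p) (v i p)) ->
  forall i p, in_layer l.+1 i p ->
  is_derive t0 1 (fun t => layer P l.+1 (g t) i p) (dlayer l.+1 (g t0) v i p).
Proof.
move=> lL g_der i p ip; rewrite /dlayer ip.
apply: (is_derive1_comp (f := f P l.+1 i) (g := fun t => preact P l.+1 (g t) i p)).
  by rewrite derive1E; apply/derivableP/f_derivable => //; case/andP: ip.
have KM : (K P l.+1 <= M P l)%N by apply: K_le_M; lia.
rewrite -[X in is_derive _ _ _ X]addr0; apply: is_deriveD.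
apply: is_derive_big_seq => j; rewrite mem_index_iota => jN.
apply: is_derive_big_seq => d _; apply: is_derive_big_seq => k.
rewrite mem_index_iota => kK.
apply: is_deriveZ; rewrite -(exprfctE (fun t => g t j (p + k)%N)).
apply: is_deriveX; apply: g_der.
by move: jN kK ip KM; rewrite /in_layer /=; lia.
Qed.

Lemma is_derive_run n l (g : R -> signals R) (v : signals R) (t0 : R) :
  (l + n <= L P)%N ->
  (forall i p, in_layer l i p -> is_derive t0 1 (fun t => g t i p) (v i p)) ->
  forall i p, in_layer (l + n) i p ->
  is_derive t0 1 (fun t => run P l n (g t) i p) (drun l n (g t0) v i p).
Proof.
elim: n l g v => [|n IH] l g v lnL g_der i p.
  by rewrite addn0; exact: g_der.
rewrite -addSnnS => ip /=; apply: (IH _ (fun t => layer P l.+1 (g t))) ip.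
  by rewrite addSnnS.
by apply: is_derive_layer => //; lia.
Qed.

Definition delta_signal (j m : nat) : signals R :=
  fun i p => (i == j)%:R * (p == m)%:R.

Lemma is_derive_upd (z : signals R) j m i p (t0 : R) :
  is_derive t0 1 (fun t => upd z j m t i p) (delta_signal j m i p).
Proof.
rewrite /upd /delta_signal; case: eqP => _; case: eqP => _ /=;
  rewrite ?mulr1 ?mulr0 ?mul0r; [exact: is_derive_id | exact: is_derive_cst ..].
Qed.

Lemma upd_self (z : signals R) j m : upd z j m (z j m) = z.
Proof.
apply/funext => i; apply/funext => p; rewrite /upd.
by case: ifP => // /andP[/eqP -> /eqP ->].
Qed.

Lemma signal_sumE (I : Type) (s : seq I) (F : I -> signals R) i p :
  (\sum_(a <- s) F a) i p = \sum_(a <- s) F a i p.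
Proof. by elim: s => [|a s IH]; rewrite ?big_nil ?big_cons //= -IH. Qed.

Lemma signal_scaleE (c : R) (v : signals R) i p : (c *: v) i p = c * v i p.
Proof. by []. Qed.

Lemma signal_sum_delta l (v : signals R) :
  (forall i p, ~~ in_layer l i p -> v i p = 0) ->
  v = \sum_(1 <= i < (N P l).+1) \sum_(0 <= k < M P l) v i k *: delta_signal i k.
Proof.
move=> v_out; apply/funext => i; apply/funext => p.
rewrite signal_sumE (eq_bigr (fun i' => (i' == i)%:R * ((p < M P l)%:R * v i' p))).
  rewrite big_nat_delta; have [/andP[iN pM] | ip] := boolP (in_layer l i p).
    by rewrite pM ltnS iN !mul1r.
  by rewrite v_out // !mulr0.
move=> i' _; rewrite signal_sumE.
rewrite (eq_bigr (fun k => (k == p)%:R * ((i' == i)%:R * v i' k))).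
  by rewrite big_nat_delta leq0n; ring.
move=> k _; rewrite signal_scaleE /delta_signal [i' == i]eq_sym [k == p]eq_sym.
by ring.
Qed.

Lemma dlayer_delta l z j m i k :
  in_layer l.+1 i k -> (0 < j <= N P l)%N ->
  dlayer l.+1 z (delta_signal j m) i k =
  derive1 (f P l.+1 i) (preact P l.+1 z i k) *
  \sum_(1 <= d < (D P l.+1).+1) d%:R * z j m ^+ d.-1 *
     \sum_(0 <= q < K P l.+1) (k + q == m)%:R * w P l.+1 i j d q.
Proof.
move=> ik jN; rewrite /dlayer ik; congr (_ * _).
rewrite (eq_bigr (fun j' => (j' == j)%:R * \sum_(1 <= d < (D P l.+1).+1)
  d%:R * z j m ^+ d.-1 * \sum_(0 <= q < K P l.+1) (k + q == m)%:R * w P l.+1 i j d q)).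
  by rewrite big_nat_delta jN mul1r.
move=> j' _; rewrite mulr_sumr; apply: eq_bigr => d _.
rewrite !mulr_sumr; apply: eq_bigr => q _; rewrite /delta_signal.
case: eqVneq => [-> | _]; last by rewrite !(mul0r, mulr0).
by case: eqVneq => [<- | _]; rewrite ?(mul0r, mulr0) //; ring.
Qed.

Variables (eps : 'M[R]_(N P (L P), M P (L P)) -> R) (y0 : signals R).

Definition outmx (X : signals R) : 'M[R]_(N P (L P), M P (L P)) :=
  \matrix_(i, k) X i.+1 k.

Hypothesis eps_diff : differentiable eps (outmx (outp P y0 (L P))).

Lemma run_outp l n : run P l n (outp P y0 l) = outp P y0 (l + n).
Proof. by elim: n l => [|n IH] l; rewrite ?addn0 //= IH addSnnS. Qed.

Definition dloss (l : nat) (v : signals R) : R :=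
  'd eps (outmx (outp P y0 (L P))) (outmx (drun l (L P - l) (outp P y0 l) v)).

Lemma dloss_is_linear l : linear (dloss l).
Proof.
move=> a u v; rewrite /dloss drun_is_linear.
have -> : forall U V : signals R, outmx (a *: U + V) = a *: outmx U + outmx V.
  by move=> U V; apply/matrixP => i k; rewrite !mxE.
by rewrite linearP.
Qed.

HB.instance Definition _ l :=
  GRing.isLinear.Build R (signals R) R *:%R (dloss l) (dloss_is_linear l).

Lemma dloss_layer l v : (l < L P)%N ->
  dloss l v = dloss l.+1 (dlayer l.+1 (outp P y0 l) v).
Proof. by move=> lL; rewrite /dloss (_ : L P - l = (L P - l.+1).+1)%N //; lia. Qed.

Lemma dEdy_dloss l j m : (l <= L P)%N -> in_layer l j m ->
  dEdy P eps y0 l j m = dloss l (delta_signal j m).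
Proof.
move=> lL jm; have lnL : (l + (L P - l) = L P)%N by rewrite subnKC.
have upd_der (i : 'I_(N P (L P))) (k : 'I_(M P (L P))) :
    is_derive (outp P y0 l j m) 1
      (fun t => run P l (L P - l) (upd (outp P y0 l) j m t) i.+1 k)
      (drun l (L P - l) (outp P y0 l) (delta_signal j m) i.+1 k).
  have := is_derive_run (n := L P - l) (l := l) (g := upd (outp P y0 l) j m)
    (v := delta_signal j m) (t0 := outp P y0 l j m).
  rewrite upd_self lnL; apply=> //; first by move=> *; exact: is_derive_upd.
  by have := ltn_ord i; have := ltn_ord k; rewrite /in_layer; lia.
rewrite /dEdy /loss_at.
rewrite (derive1_comp_matrix _ upd_der) upd_self run_outp lnL; last exact: eps_diff.
by rewrite /dloss /outmx.
Qed.

Lemma dEdy_backprop l j m : (l < L P)%N -> in_layer l j m ->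
  dEdy P eps y0 l j m =
  \sum_(1 <= i < (N P l.+1).+1) \sum_(0 <= k < M P l.+1)
    dEdx P eps y0 l.+1 i k *
    \sum_(1 <= d < (D P l.+1).+1) d%:R * outp P y0 l j m ^+ d.-1 *
      \sum_(0 <= q < K P l.+1) (k + q == m)%:R * w P l.+1 i j d q.
Proof.
move=> lL jm; rewrite (dEdy_dloss (ltnW lL) jm) (dloss_layer _ lL).
rewrite (signal_sum_delta (l := l.+1)
  (v := dlayer l.+1 (outp P y0 l) (delta_signal j m))); last exact: dlayer_outside.
rewrite raddf_sum; apply: eq_big_nat => i iN.
rewrite raddf_sum; apply: eq_big_nat => k kM.
have ik : in_layer l.+1 i k by rewrite /in_layer; lia.
rewrite /= linearZ /= -(dEdy_dloss lL ik).
rewrite dlayer_delta //; last by case/andP: jm.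
by rewrite /dEdx -[RHS]mulrA [RHS]mulrC.
Qed.

End TangentPropagation.

Theorem proposition2 (R : realType) (P : pnn R)
  (eps : 'M[R]_(N P (L P), M P (L P)) -> R) (y0 : signals R) :
  (2 <= L P)%N ->
  (forall l, (1 <= l <= L P)%N ->
     [/\ (0 < N P l)%N, (0 < K P l)%N, (0 < D P l)%N & (K P l <= M P l.-1)%N]) ->
  (forall l i, (1 <= l <= L P)%N -> (1 <= i <= N P l)%N ->
     forall t : R, derivable (f P l i) t 1) ->
  (forall Y, differentiable eps Y) ->
  forall l j m, (1 <= l <= L P - 1)%N -> (1 <= j <= N P l)%N -> (m < M P l)%N ->
  dEdy P eps y0 l j m =
  \sum_(1 <= d < (D P l.+1).+1)
     d%:R * (\sum_(1 <= i < (N P l.+1).+1)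
               conv1d (K P l.+1) (wflip P l.+1 i j d) (gpad P eps y0 l.+1 i) m)
          * (outp P y0 l j m) ^+ (d - 1).
Proof.
move=> L_ge2 shapes f_der eps_diff l j m lL jN mM.
have K_le_M l' : (1 <= l' <= L P)%N -> (K P l' <= M P l'.-1)%N by case/shapes.
have K_gt0 : (0 < K P l.+1)%N by case: (shapes l.+1) => //; lia.
have M_gt0 : (0 < M P l.+1)%N by rewrite /= addn1.
have conv_eq i d : conv1d (K P l.+1) (wflip P l.+1 i j d) (gpad P eps y0 l.+1 i) m =
    \sum_(0 <= k < M P l.+1) dEdx P eps y0 l.+1 i k *
      \sum_(0 <= q < K P l.+1) (k + q == m)%:R * w P l.+1 i j d q.
  exact: conv1d_flip_pad.
rewrite (dEdy_backprop K_le_M f_der (eps_diff _)); last 2 first.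
- by move: lL L_ge2; lia.
- by rewrite /in_layer jN mM.
under eq_bigr => i _ do under eq_bigr => k _ do rewrite mulr_sumr.
under eq_bigr => i _ do rewrite exchange_big.
rewrite exchange_big; apply: eq_bigr => d _.
rewrite (eq_bigr _ (fun i _ => conv_eq i d)).
rewrite mulrAC subn1 mulr_sumr; apply: eq_bigr => i _.
rewrite mulr_sumr; apply: eq_bigr => k _.
by rewrite mulrCA.
Qed.
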